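(* For every $\varepsilon>0$ there exists $N$ such that for all $n\ge N$, every vector trifferent code $\mathcal C\subseteq (S^2)^n$ of block length $n$ satisfies \[ |\mathcal C|\le (\sqrt2+\varepsilon)\left(\tfrac32\right)^n . \] That is, $|\mathcal C|\le(\sqrt2+o(1))(3/2)^n$ as $n\to\infty$.
   Context: $S^2=\{v\in\mathbb R^3:\|v\|=1\}$. Three points $x,y,z\in(S^2)^n$ (with coordinates $x_i,y_i,z_i\in S^2$) are vector trifferent if there is an index $i\in\{1,\dots,n\}$ such that $x_i,y_i,z_i$ are mutually orthogonal. A vector trifferent code of block length $n$ is a subset $\mathcal C\subseteq(S^2)^n$ such that any three distinct codewords $x,y,z\in\mathcal C$ are vector trifferent. *)

From Stdlib Require Import Reals List.
From mathcomp Require Import ssreflect ssrbool eqtype ssrnat fintype.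
Open Scope R_scope.

Definition R3 : Type := (R * R * R)%type.

Definition dot3 (u v : R3) : R :=
  let '(u1, u2, u3) := u in let '(v1, v2, v3) := v in u1 * v1 + u2 * v2 + u3 * v3.

Definition on_sphere (u : R3) : Prop := dot3 u u = 1.

Definition word (n : nat) : Type := 'I_n -> R3.
Definition in_sphere_pow (n : nat) (x : word n) : Prop := forall i, on_sphere (x i).

Definition mutually_orthogonal (a b c : R3) : Prop :=
  dot3 a b = 0 /\ dot3 a c = 0 /\ dot3 b c = 0.

Definition vector_trifferent (n : nat) (x y z : word n) : Prop :=
  exists i : 'I_n, mutually_orthogonal (x i) (y i) (z i).

Definition vector_trifferent_code (n : nat) (C : word n -> Prop) : Prop :=
  (forall x, C x -> in_sphere_pow n x) /\
  (forall x y z, C x -> C y -> C z -> x <> y -> x <> z -> y <> z ->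
     vector_trifferent n x y z).

From Stdlib Require Import Reals List.
From mathcomp Require Import ssreflect ssrbool eqtype ssrnat fintype.
Open Scope R_scope.
From Stdlib Require Import Lra.
From mathcomp Require Import all_boot all_order all_algebra Rstruct.
From mathcomp Require Import ring lra.
Import Order.TTheory GRing.Theory Num.Theory.
Local Open Scope ring_scope.

(* For codewords x_1, ..., x_m let P_i be the Kronecker product over the
   coordinates t of the projections I - x_i^t (x_i^t)^T onto (x_i^t)^perp, a
   symmetric idempotent of size 3^n.  If x_i, x_j, x_k are trifferent at t, the
   t-th factor of P_i P_j P_k is the product of the projections onto the
   orthogonal complements of an orthonormal basis of R^3, which is 0; so all
   triple traces vanish, and
   positivity of tr(B^2) and tr(M B^2) for M = sum P_i and B = M - 2 gives
   sum_{i<>j} tr(P_i P_j) <= 2 3^n, where tr(P_i P_j) = prod_t (1 + <x_i^t, x_j^t>^2).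
   Expanding this product over subsets S of coordinates, Cauchy-Schwarz applied
   to sum_i (tensor over t in S of x_i^t (x_i^t)^T) bounds each
   sum_{i,j} prod_{t in S} <x_i^t, x_j^t>^2 below by m^2 3^-|S|.  Keeping only
   |S| <= n/3 and bounding the discarded and kept subsets by exponential moments,
   m^2 ((4/3)^n - (317/240)^n) - m (189/100)^n <= 2 3^n,
   which forces m <= (sqrt 2 + o(1)) (3/2)^n. *)

Section TensorPower.
Variables (K : comNzRingType) (n d : nat).
Local Notation idx := {ffun 'I_n -> 'I_d}.

Definition tensor_mx (A : 'I_n -> 'M[K]_d) : 'M[K]_#|{: idx}| :=
  \matrix_(i, j) \prod_t A t ((enum_val i : idx) t) ((enum_val j : idx) t).

Lemma card_tensor_index : #|{: idx}| = (d ^ n)%N.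
Proof. by rewrite card_ffun !card_ord. Qed.

Lemma sum_enum_val (G : idx -> K) :
  \sum_(i < #|{: idx}|) G (enum_val i) = \sum_x G x.
Proof. by rewrite -(big_enum_val G). Qed.

Lemma tensor_mxM A B : tensor_mx A *m tensor_mx B = tensor_mx (fun t => A t *m B t).
Proof.
apply/matrixP => i j; rewrite /tensor_mx !mxE.
under [LHS]eq_bigr do rewrite !mxE.
rewrite (sum_enum_val (fun b : idx =>
  \prod_t A t ((enum_val i : idx) t) (b t) * \prod_t B t (b t) ((enum_val j : idx) t))).
under [RHS]eq_bigr do rewrite mxE.
by rewrite bigA_distr_bigA; apply: eq_bigr => b _; rewrite -big_split.
Qed.

Lemma mxtrace_tensor A : \tr (tensor_mx A) = \prod_t \tr (A t).
Proof.
rewrite /mxtrace /tensor_mx; under [LHS]eq_bigr do rewrite mxE.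
by rewrite (sum_enum_val (fun b : idx => \prod_t A t (b t) (b t))) bigA_distr_bigA.
Qed.

Lemma trmx_tensor A : (tensor_mx A)^T = tensor_mx (fun t => (A t)^T).
Proof. by apply/matrixP => i j; rewrite !mxE; apply: eq_bigr => t _; rewrite mxE. Qed.

Lemma eq_tensor_mx A B : A =1 B -> tensor_mx A = tensor_mx B.
Proof.
by move=> AB; apply/matrixP => i j; rewrite !mxE; apply: eq_bigr => t _; rewrite AB.
Qed.

End TensorPower.
Arguments tensor_mx {K n d}.

Section Frobenius.
Variables (K : comNzRingType) (k : nat).
Implicit Types A B : 'M[K]_k.

Definition frob A B := \tr (A *m B^T).

Lemma frobE A B : frob A B = \sum_i \sum_j A i j * B i j.
Proof. by apply: eq_bigr => i _; rewrite mxE; apply: eq_bigr => j _; rewrite mxE. Qed.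

Lemma frob_suml (I : finType) (A : I -> 'M[K]_k) B :
  frob (\sum_i A i) B = \sum_i frob (A i) B.
Proof. by rewrite /frob mulmx_suml raddf_sum. Qed.

Lemma frob_sumr (I : finType) A (B : I -> 'M[K]_k) :
  frob A (\sum_i B i) = \sum_i frob A (B i).
Proof. by rewrite /frob raddf_sum mulmx_sumr raddf_sum. Qed.

End Frobenius.
Arguments frob {K k}.

Lemma frob_tensor (K : comNzRingType) n d (A B : 'I_n -> 'M[K]_d) :
  frob (tensor_mx A) (tensor_mx B) = \prod_t frob (A t) (B t).
Proof. by rewrite /frob trmx_tensor tensor_mxM mxtrace_tensor. Qed.

Section RankOne.
Variables (K : comNzRingType) (d : nat).
Implicit Types u v w : 'rV[K]_d.

Definition dotr u v : K := (u *m v^T) 0 0.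

Lemma dotrC u v : dotr u v = dotr v u.
Proof.
have -> : dotr u v = (u *m v^T)^T 0 0 by rewrite mxE.
by rewrite trmx_mul trmxK.
Qed.

Lemma mulmx_row_tr u v : u *m v^T = (dotr u v)%:M.
Proof. exact: mx11_scalar. Qed.

Lemma mxtrace_col_row u v : \tr (u^T *m v) = dotr u v.
Proof. by rewrite mxtrace_mulC trace_mx11 dotrC. Qed.

Lemma rank1_mul u v : u^T *m u *m (v^T *m v) = dotr u v *: (u^T *m v).
Proof. by rewrite mulmxA -(mulmxA _ u) mulmx_row_tr mul_mx_scalar -scalemxAl. Qed.

Definition orthoproj u : 'M[K]_d := 1%:M - u^T *m u.

Lemma trmx_orthoproj u : (orthoproj u)^T = orthoproj u.
Proof. by rewrite /orthoproj linearB /= tr_scalar_mx trmx_mul trmxK. Qed.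

Lemma orthoproj_mul u v :
  orthoproj u *m orthoproj v = orthoproj u - v^T *m v + dotr u v *: (u^T *m v).
Proof.
rewrite {2}/orthoproj mulmxBr mulmx1 {2}/orthoproj mulmxBl mul1mx rank1_mul.
by rewrite opprB addrA addrAC.
Qed.

Lemma orthoproj_idem u : dotr u u = 1 -> orthoproj u *m orthoproj u = orthoproj u.
Proof. by move=> u1; rewrite orthoproj_mul u1 scale1r subrK. Qed.

Lemma mxtrace_orthoproj u : \tr (orthoproj u) = d%:R - dotr u u.
Proof. by rewrite raddfB /= mxtrace1 mxtrace_col_row. Qed.

Lemma mxtrace_orthoproj_mul u v :
  \tr (orthoproj u *m orthoproj v) = d%:R - dotr u u - dotr v v + dotr u v ^+ 2.
Proof.
by rewrite orthoproj_mul raddfD raddfB /= mxtraceZ mxtrace_orthoproj !mxtrace_col_row expr2.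
Qed.

Lemma mxtrace_orthoproj_orthonormal u v w :
  dotr u u = 1 -> dotr v v = 1 -> dotr w w = 1 ->
  dotr u v = 0 -> dotr u w = 0 -> dotr v w = 0 ->
  \tr (orthoproj u *m orthoproj v *m orthoproj w) = d%:R - 3.
Proof.
move=> u1 v1 w1 uv uw vw.
rewrite orthoproj_mul uv scale0r addr0 mulmxBl raddfB /= mxtrace_orthoproj_mul.
rewrite /orthoproj mulmxBr mulmx1 rank1_mul vw scale0r subr0 mxtrace_col_row.
by rewrite u1 v1 w1 uw expr0n /=; ring.
Qed.

Lemma frob_rank1 u v : frob (u^T *m u) (v^T *m v) = dotr u v ^+ 2.
Proof. by rewrite /frob trmx_mul trmxK rank1_mul mxtraceZ mxtrace_col_row expr2. Qed.

End RankOne.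
Arguments dotr {K d}.
Arguments orthoproj {K d}.

Section CauchySchwarz.
Variable K : realFieldType.

Lemma cauchy_schwarz (T : finType) (a b : T -> K) :
  (\sum_x a x * b x) ^+ 2 <= (\sum_x a x * a x) * (\sum_x b x * b x).
Proof.
have sum_prod (u v : T -> K) : \sum_x \sum_y u x * v y = (\sum_x u x) * (\sum_y v y).
  by rewrite mulr_suml; apply: eq_bigr => x _; rewrite mulr_sumr.
have : 0 <= \sum_x \sum_y (a x * b y - a y * b x) ^+ 2.
  by apply: sumr_ge0 => x _; apply: sumr_ge0 => y _; exact: sqr_ge0.
have -> : \sum_x \sum_y (a x * b y - a y * b x) ^+ 2 =
    \sum_x \sum_y (a x * a x) * (b y * b y) + \sum_x \sum_y (b x * b x) * (a y * a y)
    - 2 * \sum_x \sum_y (a x * b x) * (a y * b y).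
  rewrite mulr_sumr -big_split -sumrB /=; apply: eq_bigr => x _.
  by rewrite mulr_sumr -big_split -sumrB /=; apply: eq_bigr => y _; ring.
rewrite !sum_prod expr2; lra.
Qed.

Lemma frob_ge0 k (A : 'M[K]_k) : 0 <= frob A A.
Proof.
by rewrite frobE; apply: sumr_ge0 => i _; apply: sumr_ge0 => j _; rewrite -expr2 sqr_ge0.
Qed.

Lemma frob_cauchy_schwarz k (A B : 'M[K]_k) : frob A B ^+ 2 <= frob A A * frob B B.
Proof.
by rewrite !frobE !pair_bigA; exact: cauchy_schwarz.
Qed.
End CauchySchwarz.

Section FramePotential.
Variables (K : realFieldType) (n d m : nat).
Variables (y : 'I_m -> 'I_n -> 'rV[K]_d) (Q : 'I_n -> 'M[K]_d).
Hypothesis frob_Qy : forall i t, frob (Q t) ((y i t)^T *m y i t) = 1.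

Lemma frame_potential_ge : m%:R ^+ 2 <=
  \prod_t frob (Q t) (Q t) * \sum_i \sum_j \prod_t dotr (y i t) (y j t) ^+ 2.
Proof.
pose Phi i := tensor_mx (fun t => (y i t)^T *m y i t).
have -> : m%:R = frob (tensor_mx Q) (\sum_i Phi i) :> K.
  rewrite frob_sumr -[m in LHS]card_ord -sumr_const; apply: eq_bigr => i _.
  by rewrite frob_tensor big1 // => t _; exact: frob_Qy.
have -> : \sum_i \sum_j \prod_t dotr (y i t) (y j t) ^+ 2 = frob (\sum_i Phi i) (\sum_i Phi i).
  rewrite frob_suml; apply: eq_bigr => i _; rewrite frob_sumr; apply: eq_bigr => j _.
  by rewrite frob_tensor; apply: eq_bigr => t _; rewrite frob_rank1.
rewrite -frob_tensor; exact: frob_cauchy_schwarz.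
Qed.
End FramePotential.
Arguments frame_potential_ge {K n d m y Q}.

Section ProjectionFamily.
Variables (K : realFieldType) (k m : nat) (P : 'I_m -> 'M[K]_k).
Hypothesis P_sym : forall i, (P i)^T = P i.
Hypothesis P_idem : forall i, P i *m P i = P i.
Hypothesis P_triple0 : forall i j l, i != j -> i != l -> j != l ->
  \tr (P i *m P j *m P l) = 0.

Let M := \sum_i P i.
Let t1 := \sum_i \tr (P i).
Let t2 := \sum_i \sum_(j | j != i) \tr (P i *m P j).

Lemma mxtrace_sum_sqr : \tr (M *m M) = t1 + t2.
Proof.
rewrite /M mulmx_suml raddf_sum /t1 /t2 -big_split /=; apply: eq_bigr => i _.
by rewrite mulmx_sumr raddf_sum (bigD1 i) //= P_idem.
Qed.

Lemma mxtrace_sum_cube : \tr (M *m M *m M) = t1 + 3 * t2.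
Proof.
rewrite -mulmxA {1}/M mulmx_suml raddf_sum /t1 /t2 mulr_sumr -big_split /=.
apply: eq_bigr => i _.
rewrite /M mulmx_suml mulmx_sumr raddf_sum (bigD1 i) //=.
rewrite mulmxA P_idem mulmx_sumr raddf_sum (bigD1 i) //= P_idem.
have -> : \sum_(j | j != i) \tr (P i *m (P j *m \sum_l P l))
    = \sum_(j | j != i) 2 * \tr (P i *m P j).
  apply: eq_bigr => j ji; rewrite mulmx_sumr mulmx_sumr raddf_sum.
  rewrite (bigD1 i) //= (bigD1 j) /=; last by rewrite ji.
  rewrite big1 ?addr0; last first.
    by move=> l /andP[li lj]; rewrite mulmxA; apply: P_triple0; rewrite // eq_sym.
  rewrite P_idem mxtrace_mulC -mulmxA P_idem mxtrace_mulC; ring.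
rewrite -mulr_sumr; ring.
Qed.

Lemma sum_mxtrace_mul_offdiag_le : t2 <= 2 * k%:R.
Proof.
(* tr (B B) = 4 k - 3 t1 + t2 and tr (M B B) = t1 - t2, both nonnegative. *)
set B := M - 2%:M.
have BT : B^T = B.
  by rewrite /B linearB /= tr_scalar_mx /M raddf_sum /=; under eq_bigr do rewrite P_sym.
have trBB : 0 <= \tr (B *m B) by rewrite -{2}BT -/(frob B B) frob_ge0.
have trMBB : 0 <= \tr (M *m (B *m B)).
  have -> : \tr (M *m (B *m B)) = \sum_i frob (P i *m B) (P i *m B).
    rewrite /M mulmx_suml raddf_sum; apply: eq_bigr => i _.
    rewrite /frob trmx_mul BT P_sym mulmxA mxtrace_mulC !mulmxA -(mulmxA B) P_idem.
    by rewrite -(mulmxA B (P i) B) mxtrace_mulC.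
  by apply: sumr_ge0 => i _; exact: frob_ge0.
have BB : B *m B = M *m M - 2 *: M - (2 *: M - 2 *: 2%:M).
  by rewrite /B mulmxBl !mulmxBr !mul_mx_scalar mul_scalar_mx.
rewrite BB in trBB trMBB.
have trM : \tr M = t1 by rewrite /M raddf_sum.
move: trBB trMBB; rewrite !mulmxBr -!scalemxAr mul_mx_scalar mulmxA !raddfB /= !mxtraceZ.
rewrite mxtrace_scalar mxtrace_sum_sqr mxtrace_sum_cube trM -mulr_natr; lra.
Qed.

End ProjectionFamily.
Arguments sum_mxtrace_mul_offdiag_le {K k m P}.

Section SubsetSums.
Variables (K : realFieldType) (n : nat).

Lemma prod_1D_subsets (a : 'I_n -> K) :
  \prod_t (1 + a t) = \sum_(S : {set 'I_n}) \prod_(t in S) a t.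
Proof.
under eq_bigr do rewrite addrC.
by rewrite bigA_distr; apply: eq_bigr => S _; rewrite [RHS]big_mkcond.
Qed.

Lemma sum_subsets_exp (y : K) : \sum_(S : {set 'I_n}) y ^+ #|S| = (1 + y) ^+ n.
Proof.
rewrite -[n in RHS]card_ord -prodr_const prod_1D_subsets.
by apply: eq_bigr => S _; rewrite prodr_const.
Qed.

Lemma sum_subsets_exp_le k (A : {pred {set 'I_n}}) (y r : K) :
  0 <= y -> 0 < r -> {in A, forall S : {set 'I_n}, r ^+ n <= r ^+ (k * #|S|)} ->
  \sum_(S in A) y ^+ #|S| <= (1 + y * r ^+ k) ^+ n / r ^+ n.
Proof.
move=> y0 r0 rA; have rn0 : 0 < r ^+ n by rewrite exprn_gt0.
have term_ge0 (S : {set 'I_n}) : 0 <= (y * r ^+ k) ^+ #|S| / r ^+ n.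
  apply: divr_ge0; apply: exprn_ge0; last exact: ltW.
  by apply: mulr_ge0; rewrite // exprn_ge0 // ltW.
rewrite -sum_subsets_exp mulr_suml.
apply: le_trans (_ : \sum_(S in A) (y * r ^+ k) ^+ #|S| / r ^+ n <= _); last first.
  by rewrite [X in _ <= X](bigID (mem A)) /= lerDl sumr_ge0.
apply: ler_sum => S SA; rewrite ler_pdivlMr // exprMn -exprM.
by apply: ler_wpM2l; [exact: exprn_ge0 | exact: rA].
Qed.

Lemma sum_sparse_subsets_ge : (4/3) ^+ n - (317/240) ^+ n <=
  \sum_(S : {set 'I_n} | (3 * #|S| <= n)%N) 3^-1 ^+ #|S| :> K.
Proof.
have dense_le : \sum_(S : {set 'I_n} | ~~ (3 * #|S| <= n)%N) 3^-1 ^+ #|S|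
    <= (317/240) ^+ n :> K.
  have -> : (317/240) ^+ n = (1 + 3^-1 * (5/4) ^+ 3) ^+ n / (5/4) ^+ n :> K.
    by rewrite -expr_div_n; congr (_ ^+ _); rewrite !exprS expr0; field.
  apply: (sum_subsets_exp_le 3); [lra | lra |].
  move=> S; rewrite -topredE /= -ltnNge => /ltnW le_n_3S.
  by apply: ler_weXn2l; first lra.
have total : \sum_(S : {set 'I_n}) 3^-1 ^+ #|S| = (4/3) ^+ n :> K.
  by rewrite sum_subsets_exp; congr (_ ^+ _); field.
by rewrite -total (bigID (fun S : {set 'I_n} => 3 * #|S| <= n)%N) /=; lra.
Qed.

Lemma num_sparse_subsets_le :
  \sum_(S : {set 'I_n} | (3 * #|S| <= n)%N) 1 <= (189/100) ^+ n :> K.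
Proof.
have -> : (189/100) ^+ n = (1 + 1 * (4/5) ^+ 3) ^+ n / (4/5) ^+ n :> K.
  by rewrite -expr_div_n; congr (_ ^+ _); rewrite !exprS expr0; field.
under eq_bigr => S _ do rewrite -(expr1n _ #|S|).
apply: (sum_subsets_exp_le 3); [lra | lra |].
by move=> S le_3S_n; apply: ler_wiXn2l; [lra | lra | ].
Qed.

End SubsetSums.

Section TrifferentFamily.
Variables (K : realFieldType) (n m : nat) (X : 'I_m -> 'I_n -> 'rV[K]_3).
Hypothesis X_unit : forall i t, dotr (X i t) (X i t) = 1.
Hypothesis X_trifferent : forall i j l : 'I_m, i != j -> i != l -> j != l ->
  exists t, [/\ dotr (X i t) (X j t) = 0, dotr (X i t) (X l t) = 0 &
                dotr (X j t) (X l t) = 0].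

Local Notation c i j t := (dotr (X i t) (X j t)).

Let P i := tensor_mx (fun t => orthoproj (X i t)).

Lemma sum_offdiag_prod_le :
  \sum_i \sum_(j | j != i) \prod_t (1 + c i j t ^+ 2) <= 2 * 3 ^+ n.
Proof.
have P_sym i : (P i)^T = P i.
  by rewrite trmx_tensor; apply: eq_tensor_mx => t; rewrite trmx_orthoproj.
have P_idem i : P i *m P i = P i.
  by rewrite tensor_mxM; apply: eq_tensor_mx => t; rewrite orthoproj_idem.
have P_triple0 i j l : i != j -> i != l -> j != l -> \tr (P i *m P j *m P l) = 0.
  move=> ij il jl; have [t [cij cil cjl]] := X_trifferent _ _ _ ij il jl.
  rewrite !tensor_mxM mxtrace_tensor (bigD1 t) //= mxtrace_orthoproj_orthonormal //.
  by rewrite subrr mul0r.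
have trPP i j : \tr (P i *m P j) = \prod_t (1 + c i j t ^+ 2).
  rewrite tensor_mxM mxtrace_tensor; apply: eq_bigr => t _.
  by rewrite mxtrace_orthoproj_mul !X_unit; ring.
under eq_bigr do under eq_bigr do rewrite -trPP.
apply: le_trans (sum_mxtrace_mul_offdiag_le P_sym P_idem P_triple0) _.
by rewrite card_tensor_index natrX.
Qed.

Lemma frame_potential_subset_ge (S : {set 'I_n}) : m%:R ^+ 2 <=
  3 ^+ #|S| * (m%:R + \sum_i \sum_(j | j != i) \prod_(t in S) c i j t ^+ 2).
Proof.
(* Coordinates outside S are replaced by a fixed unit vector, contributing 1. *)
pose e0 : 'rV[K]_3 := delta_mx 0 0.
have e0_unit : dotr e0 e0 = 1 by rewrite /dotr trmx_delta mul_delta_mx mxE.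
pose y i t := if t \in S then X i t else e0.
pose Q t := if t \in S then 1%:M else e0^T *m e0.
have frob_Qy i t : frob (Q t) ((y i t)^T *m y i t) = 1.
  rewrite /Q /y; case: (t \in S).
    by rewrite /frob mul1mx mxtrace_tr mxtrace_col_row X_unit.
  by rewrite frob_rank1 e0_unit expr1n.
have frob_QQ : \prod_t frob (Q t) (Q t) = 3 ^+ #|S|.
  rewrite -prodr_const [RHS]big_mkcond /=; apply: eq_bigr => t _; rewrite /Q.
  case: (t \in S); first by rewrite /frob trmx1 mulmx1 mxtrace1.
  by rewrite frob_rank1 e0_unit expr1n.
have gram : \sum_i \sum_j \prod_t dotr (y i t) (y j t) ^+ 2 =
    m%:R + \sum_i \sum_(j | j != i) \prod_(t in S) c i j t ^+ 2.
  rewrite -[m in m%:R]card_ord -sumr_const -big_split /=; apply: eq_bigr => i _.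
  rewrite (bigD1 i) //=; congr (_ + _).
    by apply: big1 => t _; rewrite /y; case: (t \in S); rewrite ?X_unit ?e0_unit expr1n.
  apply: eq_bigr => j _; rewrite [RHS]big_mkcond /=; apply: eq_bigr => t _.
  by rewrite /y; case: (t \in S); rewrite ?e0_unit ?expr1n.
by rewrite -frob_QQ -gram; exact: frame_potential_ge.
Qed.

Lemma sum_offdiag_prod_ge :
  \sum_(S : {set 'I_n} | (3 * #|S| <= n)%N) (m%:R ^+ 2 / 3 ^+ #|S| - m%:R) <=
  \sum_i \sum_(j | j != i) \prod_t (1 + c i j t ^+ 2).
Proof.
pose T (S : {set 'I_n}) := \sum_i \sum_(j | j != i) \prod_(t in S) c i j t ^+ 2.
have T_ge0 S : 0 <= T S.
  by do 2![apply: sumr_ge0 => ? _]; apply: prodr_ge0 => t _; exact: sqr_ge0.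
have -> : \sum_i \sum_(j | j != i) \prod_t (1 + c i j t ^+ 2) = \sum_(S : {set 'I_n}) T S.
  under eq_bigr do under eq_bigr do rewrite prod_1D_subsets.
  by rewrite exchange_big /=; apply: eq_bigr => S _; rewrite /T exchange_big.
rewrite [X in _ <= X](bigID (fun S : {set 'I_n} => 3 * #|S| <= n)%N) /=.
rewrite -[X in X <= _]addr0 lerD ?sumr_ge0 // ler_sum // => S _.
rewrite lerBlDl ler_pdivrMr ?exprn_gt0 // mulrC.
exact: frame_potential_subset_ge.
Qed.

Lemma trifferent_family_ineq : (m%:R : K) ^+ 2 * ((4/3) ^+ n - (317/240) ^+ n)
  - m%:R * (189/100) ^+ n <= 2 * 3 ^+ n.
Proof.
have := le_trans sum_offdiag_prod_ge sum_offdiag_prod_le.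
rewrite sumrB -mulr_sumr.
under eq_bigr do rewrite -exprVn.
under [X in _ - X <= _]eq_bigr do rewrite -[m%:R]mulr1.
rewrite -mulr_sumr.
have m_ge0 : 0 <= (m%:R : K) by rewrite ler0n.
have := ler_wpM2l (sqr_ge0 (m%:R : K)) (sum_sparse_subsets_ge K n).
have := ler_wpM2l m_ge0 (num_sparse_subsets_le K n).
lra.
Qed.

Lemma trifferent_family_normalized_ineq (mu := m%:R * (2/3) ^+ n : K) :
  mu ^+ 2 * (1 - (317/320) ^+ n) - mu * (189/200) ^+ n <= 2.
Proof.
rewrite -(ler_pM2r (exprn_gt0 n (ltr0n K 3))).
have base1 : 4/3 = 2/3 * (2/3) * 3 :> K by field.
have base2 : 317/240 = 2/3 * (2/3) * (317/320) * 3 :> K by field.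
have base3 : 189/100 = 2/3 * (189/200) * 3 :> K by field.
have -> : (mu ^+ 2 * (1 - (317/320) ^+ n) - mu * (189/200) ^+ n) * 3 ^+ n =
    m%:R ^+ 2 * ((4/3) ^+ n - (317/240) ^+ n) - m%:R * (189/100) ^+ n.
  by rewrite /mu base1 base2 base3 !exprMn; ring.
exact: trifferent_family_ineq.
Qed.

End TrifferentFamily.
Arguments trifferent_family_normalized_ineq {K n m X}.

Local Open Scope R_scope.

Definition row_of (u : R3) : 'rV[R]_3 :=
  \row_k match nat_of_ord k with 0%N => u.1.1 | 1%N => u.1.2 | _ => u.2 end.

Lemma dotr_row_of u v : dotr (row_of u) (row_of v) = dot3 u v.
Proof.
case: u => [[u1 u2] u3]; case: v => [[v1 v2] v3].
rewrite /dotr mxE !big_ord_recl big_ord0 !mxE /=.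
by rewrite addr0 !addrA.
Qed.

Lemma code_normalized_ineq n (C : word n -> Prop) (l : list (word n)) :
  vector_trifferent_code n C -> NoDup l -> (forall x, In x l -> C x) ->
  let mu := INR (length l) * (2 / 3) ^ n in
  mu * mu * (1 - (317 / 320) ^ n) - mu * (189 / 200) ^ n <= 2.
Proof.
move=> [C_sphere C_trifferent] l_uniq l_C.
pose m := length l; pose d : word n := fun _ => (0, 0, 0).
pose X (i : 'I_m) t := row_of (List.nth i l d t).
have l_nth (i : 'I_m) : In (List.nth i l d) l.
  by apply: nth_In; apply/ssrnat.ltP; exact: ltn_ord.
have nth_inj (i j : 'I_m) : i != j -> List.nth i l d <> List.nth j l d.
  move=> /eqP ij E; apply: ij; apply: val_inj.
  by apply: (proj1 (NoDup_nth l d) l_uniq) => //; apply/ssrnat.ltP; exact: ltn_ord.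
have X_unit i t : dotr (X i t) (X i t) = 1.
  by rewrite dotr_row_of; exact: C_sphere (l_C _ (l_nth i)) t.
have X_trifferent (i j k : 'I_m) : i != j -> i != k -> j != k ->
    exists t, [/\ dotr (X i t) (X j t) = 0, dotr (X i t) (X k t) = 0 &
                  dotr (X j t) (X k t) = 0].
  move=> ij ik jk.
  have [t [cij [cik cjk]]] := C_trifferent _ _ _ (l_C _ (l_nth i)) (l_C _ (l_nth j))
    (l_C _ (l_nth k)) (nth_inj _ _ ij) (nth_inj _ _ ik) (nth_inj _ _ jk).
  by exists t; rewrite !dotr_row_of.
have := trifferent_family_normalized_ineq X_unit X_trifferent.
move/RleP; rewrite -!RpowE -!INRE.
rewrite !(INR_IZR_INZ 2) !(INR_IZR_INZ 3) (INR_IZR_INZ 317) (INR_IZR_INZ 320).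
rewrite (INR_IZR_INZ 189) (INR_IZR_INZ 200) /=.
by rewrite Rmult_1_r.
Qed.

Lemma eventually_quadratic_gt {x : R} (u v : R) : 0 < x -> 2 < x * x ->
  0 <= u < 1 -> 0 <= v < 1 ->
  exists N, forall n, (N <= n)%nat -> 2 < x * x * (1 - u ^ n) - x * v ^ n.
Proof.
move=> x_gt0 xx_gt2 [u_ge0 u_lt1] [v_ge0 v_lt1].
pose delta := (x * x - 2) / (2 * (x * x + x)).
have delta_gt0 : 0 < delta by apply: Rdiv_lt_0_compat; Lra.nra.
have [Nu small_u] := pow_lt_1_zero u ltac:(rewrite Rabs_pos_eq; Lra.lra) delta delta_gt0.
have [Nv small_v] := pow_lt_1_zero v ltac:(rewrite Rabs_pos_eq; Lra.lra) delta delta_gt0.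
exists (maxn Nu Nv) => n; rewrite geq_max => /andP[/ssrnat.leP n_ge_Nu /ssrnat.leP n_ge_Nv].
have := small_u n n_ge_Nu; have := small_v n n_ge_Nv.
rewrite !Rabs_pos_eq; try exact: pow_le.
have : delta * (2 * (x * x + x)) = x * x - 2.
  by rewrite /delta /Rdiv Rmult_assoc Rinv_l ?Rmult_1_r //; Lra.nra.
have : 0 <= u ^ n by exact: pow_le.
have : 0 <= v ^ n by exact: pow_le.
Lra.nra.
Qed.

Lemma le_of_quadratic_le {a b x mu : R} : 0 <= a -> 0 < x ->
  2 < x * x * a - x * b -> mu * mu * a - mu * b <= 2 -> mu <= x.
Proof.
move=> a_ge0 x_gt0 x_big mu_small; apply: Rnot_lt_le => x_lt_mu.
have xab_gt0 : 0 < x * a - b by apply: (Rmult_lt_reg_l x); Lra.nra.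
have : 0 <= x * a * (mu - x) by apply: Rmult_le_pos; Lra.nra.
have : 0 < (mu - x) * (mu * a - b) by apply: Rmult_lt_0_compat; Lra.nra.
Lra.nra.
Qed.

Theorem theorem1 :
  forall eps : R, 0 < eps ->
  exists N : nat, forall n : nat, (N <= n)%nat ->
  forall C : word n -> Prop, vector_trifferent_code n C ->
  forall l : list (word n), NoDup l -> (forall x, In x l -> C x) ->
  INR (length l) <= (sqrt 2 + eps) * (3 / 2) ^ n.
Proof.
move=> eps eps_gt0.
have sqrt2_ge0 := sqrt_pos 2.
have sqrt2_sqr : sqrt 2 * sqrt 2 = 2 by apply: sqrt_sqrt; Lra.lra.
have x_gt0 : 0 < sqrt 2 + eps by Lra.lra.
have [N large_n] := eventually_quadratic_gt (317 / 320) (189 / 200) x_gt0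
  ltac:(Lra.nra) ltac:(Lra.lra) ltac:(Lra.lra).
exists N => n n_ge_N C C_code l l_uniq l_C.
have a_ge0 : 0 <= 1 - (317 / 320) ^ n.
  by have := pow_incr (317 / 320) 1 n ltac:(Lra.lra); rewrite pow1; Lra.lra.
have := le_of_quadratic_le a_ge0 x_gt0 (large_n n n_ge_N)
  (code_normalized_ineq _ _ _ C_code l_uniq l_C).
have scale : (2 / 3) ^ n * (3 / 2) ^ n = 1.
  by rewrite -Rpow_mult_distr (_ : 2 / 3 * (3 / 2) = 1) ?pow1 //; Lra.lra.
have q_gt0 : 0 < (3 / 2) ^ n by apply: pow_lt; Lra.lra.
move=> /(Rmult_le_compat_r _ _ _ (Rlt_le _ _ q_gt0)).
by rewrite Rmult_assoc scale Rmult_1_r.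
Qed.
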